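(* Let $B=R(t,\sigma,H,J)$ and $B'=R'(t',\sigma',H',J')$ be BR algebras, and let $\phi:R\to R'$ be a $\Bbbk$-algebra homomorphism with $\phi(H)\subseteq H'$, $\phi(J)\subseteq J'$ and $\phi\circ\sigma=\sigma'\circ\phi$. Then for each $\gamma\in\Bbbk^\times$ there is a graded algebra homomorphism $\Phi_\gamma:B\to B'$ with $\Phi_\gamma(at^n)=\gamma^n\phi(a)(t')^n$ for all $n\in\mathbb Z$ and $a\in I^{(n)}$ (in particular $\Phi_\gamma$ restricts to $\phi$ on $R=B_0$). Moreover: (1) if $\Phi_\gamma$ is injective (resp. surjective), then $\phi$ is injective (resp. surjective); (2) if $R'$ is a domain and $\phi$ is injective, then $\Phi_\gamma$ is injective; (3) if $\phi(H)=H'$, $\phi(J)=J'$ and $\phi$ is surjective, then $\Phi_\gamma$ is surjective.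
   Context: $\Bbbk$ is a field; all algebras are associative unital $\Bbbk$-algebras. For an algebra $R$ and $\sigma\in\operatorname{Aut}_\Bbbk(R)$, $R[t,t^{-1};\sigma]$ is the skew Laurent ring: generated over $R$ by $t,t^{-1}$ with $tt^{-1}=t^{-1}t=1$ and $t^{\pm1}r=\sigma^{\pm1}(r)t^{\pm1}$ for $r\in R$. Given two-sided ideals $H,J$ of $R$, set $I^{(0)}=R$, $I^{(n)}=J\sigma(J)\cdots\sigma^{n-1}(J)$ for $n\ge1$, and $I^{(n)}=\sigma^{-1}(H)\sigma^{-2}(H)\cdots\sigma^{n}(H)$ for $n\le-1$; it is assumed throughout that $I^{(n)}\neq0$ for all $n\in\mathbb Z$. The Bell–Rogalski (BR) algebra is $R(t,\sigma,H,J)=\bigoplus_{n\in\mathbb Z}I^{(n)}t^n\subseteq R[t,t^{-1};\sigma]$, graded by $\deg(I^{(n)}t^n)=n$. For $B'$ the analogous notation $I'^{(n)}$ is used with $R',\sigma',H',J',t'$. *)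

From HB Require Import structures.
From mathcomp Require Import all_boot all_order all_algebra.
From mathcomp Require Import finmap.
Set Implicit Arguments. Unset Strict Implicit. Unset Printing Implicit Defensive.
Import Order.TTheory GRing.Theory Num.Theory.
Local Open Scope ring_scope.


Definition is_ideal (R : nzRingType) (I : R -> Prop) : Prop :=
  [/\ I 0, (forall x y, I x -> I y -> I (x + y)) &
      (forall r x, I x -> I (r * x) /\ I (x * r))].

(* noncommutative domain: no zero divisors (1 != 0 holds in a nzRing) *)
Definition is_domain (R : nzRingType) : Prop :=
  forall x y : R, x * y = 0 -> x = 0 \/ y = 0.

Definition img (R S : Type) (f : R -> S) (P : R -> Prop) : S -> Prop :=
  fun y => exists x, P x /\ y = f x.

Definition idealprod (R : nzRingType) (P Q : R -> Prop) : R -> Prop :=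
  fun x => exists s : seq (R * R),
    (forall p, p \in s -> P p.1 /\ Q p.2) /\ x = \sum_(p <- s) p.1 * p.2.

Fixpoint prodI (R : nzRingType) (P : R -> Prop) (Qs : seq (R -> Prop)) : R -> Prop :=
  match Qs with
  | [::] => P
  | Q :: Qs' => idealprod P (prodI Q Qs')
  end.

Definition spow (R : Type) (s si : R -> R) (n : int) : R -> R :=
  match n with
  | Posz m => iter m s
  | Negz m => iter m.+1 si
  end.

(* I^(n):  I^(0) = R,  I^(n) = J s(J) ... s^(n-1)(J)  (n >= 1),
   I^(n) = s^-1(H) s^-2(H) ... s^n(H)  (n <= -1)   *)
Definition Ipow (R : nzRingType) (s si : R -> R) (H J : R -> Prop) (n : int)
  : R -> Prop :=
  match n with
  | Posz 0 => fun _ => True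
  | Posz m.+1 => prodI J [seq img (iter k s) J | k <- iota 1 m]
  | Negz m => prodI (img si H) [seq img (iter k si) H | k <- iota 2 m]
  end.

(* Elements of the skew Laurent ring R[t,t^-1;s]: finitely supported
   coefficient functions  f : Z -> R  standing for  \sum_n f(n) t^n. *)
Notation SL R := {fsfun int -> R with 0}.

Definition SLadd (R : nzRingType) (f g : SL R) : SL R :=
  [fsfun n in (finsupp f `|` finsupp g)%fset => f n + g n].

Definition SLscale (k : fieldType) (R : algType k) (c : k) (f : SL R) : SL R :=
  [fsfun n in finsupp f => c *: f n].

(* (a t^i)(b t^j) = a s^i(b) t^(i+j) *)
Definition SLmul (R : nzRingType) (s si : R -> R) (f g : SL R) : SL R :=
  [fsfun n in [fset (i + j)%R | i in finsupp f, j in finsupp g]%fset =>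
     \sum_(i <- finsupp f) f i * spow s si i (g (n - i))].

Definition SLmono (R : nzRingType) (n : int) (a : R) : SL R :=
  [fsfun m in [fset n]%fset => if m == n then a else 0].

Definition SLone (R : nzRingType) : SL R := @SLmono R 0 1.

(* membership in the BR algebra R(t, s, H, J) = \bigoplus_n I^(n) t^n *)
Definition inBR (R : nzRingType) (s si : R -> R) (H J : R -> Prop) (f : SL R)
  : Prop := forall n : int, Ipow s si H J n (f n).

Definition BR_data (k : fieldType) (R : algType k) (s : {lrmorphism R -> R})
  (si : R -> R) (H J : R -> Prop) : Prop :=
  [/\ cancel s si, cancel si s, is_ideal H, is_ideal J &
      forall n : int, exists x, Ipow s si H J n x /\ x <> 0].

From HB Require Import structures.
From mathcomp Require Import all_boot all_order all_algebra.
From mathcomp Require Import finmap.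
From Stdlib Require Import ClassicalEpsilon.
Set Implicit Arguments. Unset Strict Implicit. Unset Printing Implicit Defensive.
Import Order.TTheory GRing.Theory Num.Theory.
Local Open Scope ring_scope.

(** [Phi_gamma] acts coefficientwise, [a t^n |-> gamma^n phi(a) t'^n].
    Since [phi] intertwines [sigma] and [sigma'] it maps each [I^(n)] into
    [I'^(n)], and the twisted product [(a t^i)(b t^j) = a sigma^i(b) t^(i+j)]
    is respected because [gamma^i gamma^j = gamma^(i+j)].  Injectivity and
    surjectivity pass between [phi] and [Phi_gamma] degree by degree: [B_0 = R],
    [gamma^n] is invertible, and when [phi] maps [H], [J] onto [H'], [J'] it
    maps every product [I^(n)] onto [I'^(n)]. *)

Lemma iter_morph (A B : Type) (p : A -> B) (f : A -> A) (g : B -> B) :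
  {morph p : x / f x >-> g x} -> forall m, {morph p : x / iter m f x >-> iter m g x}.
Proof. by move=> pf; elim=> //= m IHm x; rewrite pf IHm. Qed.

Lemma morph_cancel (A B : Type) (p : A -> B) (f fi : A -> A) (g gi : B -> B) :
  cancel fi f -> cancel g gi -> {morph p : x / f x >-> g x} ->
  {morph p : x / fi x >-> gi x}.
Proof. by move=> fiK gK pf x; rewrite -[LHS]gK -pf fiK. Qed.

Definition maps_into (A B : Type) (p : A -> B) (P : A -> Prop) (Q : B -> Prop) :=
  forall x, P x -> Q (p x).

Definition maps_onto (A B : Type) (p : A -> B) (P : A -> Prop) (Q : B -> Prop) :=
  forall y, Q y -> exists2 x, P x & p x = y.

Lemma img_maps_into (A B : Type) (p : A -> B) (f : A -> A) (g : B -> B) P Q :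
  {morph p : x / f x >-> g x} -> maps_into p P Q -> maps_into p (img f P) (img g Q).
Proof. by move=> pf PQ _ [x [Px ->]]; exists (p x); rewrite pf; split => //; apply: PQ. Qed.

Lemma img_maps_onto (A B : Type) (p : A -> B) (f : A -> A) (g : B -> B) P Q :
  {morph p : x / f x >-> g x} -> maps_onto p P Q -> maps_onto p (img f P) (img g Q).
Proof. by move=> pf PQ _ [_ [/PQ [x Px <-] ->]]; exists (f x); [exists x | rewrite pf]. Qed.

Lemma SLmonoE (R : nzRingType) n (a : R) m : SLmono n a m = if m == n then a else 0.
Proof. by rewrite fsfunE in_fset1; case: eqP. Qed.

Lemma SLaddE (R : nzRingType) (f g : SL R) n : SLadd f g n = f n + g n.
Proof.
rewrite fsfunE in_fsetU; case: ifP => // /negbT; rewrite negb_or.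
by case/andP => /fsfun_dflt -> /fsfun_dflt ->; rewrite addr0.
Qed.

Lemma SLscaleE (k : fieldType) (R : algType k) (c : k) (f : SL R) n :
  SLscale c f n = c *: f n.
Proof. by rewrite fsfunE; case: ifP => // /negbT /fsfun_dflt ->; rewrite scaler0. Qed.

Section IdealProducts.
Variable R : nzRingType.

Lemma idealprod0 (P Q : R -> Prop) : idealprod P Q 0.
Proof. by exists [::]; rewrite big_nil. Qed.

Lemma idealprodD (P Q : R -> Prop) x y :
  idealprod P Q x -> idealprod P Q y -> idealprod P Q (x + y).
Proof.
move=> [s1 [h1 ->]] [s2 [h2 ->]]; exists (s1 ++ s2); split; last by rewrite big_cat.
by move=> p; rewrite mem_cat => /orP[/h1|/h2].
Qed.

Lemma idealprodM (P Q : R -> Prop) p q : P p -> Q q -> idealprod P Q (p * q).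
Proof.
by move=> Pp Qq; exists [:: (p, q)]; rewrite big_seq1; split=> // x; rewrite inE => /eqP ->.
Qed.

Lemma prodI0 (P : R -> Prop) Qs : P 0 -> prodI P Qs 0.
Proof. by case: Qs => //= Q Qs _; apply: idealprod0. Qed.

Variable R' : nzRingType.
Variable phi : {rmorphism R -> R'}.
Variables (F : nat -> R -> Prop) (F' : nat -> R' -> Prop).

Lemma prodI_maps_into l P P' :
  (forall n, maps_into phi (F n) (F' n)) -> maps_into phi P P' ->
  maps_into phi (prodI P (map F l)) (prodI P' (map F' l)).
Proof.
move=> FF'; elim: l P P' => [|a l IHl] P P' PP' //= _ [s [sPQ ->]].
exists [seq (phi p.1, phi p.2) | p <- s]; split.
  move=> _ /mapP [p /sPQ [Pp Qp] ->]; split; first exact: PP'.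
  exact: (IHl (F a) (F' a) (FF' a)).
by rewrite big_map rmorph_sum; apply: eq_bigr => p _; rewrite rmorphM.
Qed.

Lemma prodI_maps_onto l P P' :
  (forall n, maps_onto phi (F n) (F' n)) -> maps_onto phi P P' ->
  maps_onto phi (prodI P (map F l)) (prodI P' (map F' l)).
Proof.
move=> FF'; elim: l P P' => [|a l IHl] P P' PP' //= _ [s [sPQ ->]].
elim: s sPQ => [|[p q] s IHs] sPQ.
  by exists 0; [apply: idealprod0 | rewrite big_nil rmorph0].
case: (sPQ (p, q) (mem_head _ _)) => /= /PP' [x Px <-] /(IHl _ _ (FF' a)) [y Qy <-].
have [z Pz phiz] : exists2 z, idealprod P (prodI (F a) (map F l)) z &
    phi z = \sum_(p <- s) p.1 * p.2.
  by apply: IHs => r rs; apply: sPQ; rewrite inE rs orbT.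
exists (x * y + z); first by apply: idealprodD => //; apply: idealprodM.
by rewrite big_cons rmorphD rmorphM phiz.
Qed.

End IdealProducts.

Lemma prodIZ (k : fieldType) (R : algType k) (P : R -> Prop) Qs (c : k) x :
  (forall y, P y -> P (c *: y)) -> prodI P Qs x -> prodI P Qs (c *: x).
Proof.
case: Qs => [|Q Qs] /= PZ; first exact: PZ.
move=> [t [tPQ ->]]; exists [seq (c *: p.1, p.2) | p <- t]; split.
  by move=> _ /mapP [p /tPQ [Pp Qp] ->]; split => //; apply: PZ.
by rewrite big_map scaler_sumr; apply: eq_bigr => p _; rewrite scalerAl.
Qed.

Section Automorphism.
Variables (k : fieldType) (R : algType k) (s : {lrmorphism R -> R}) (si : R -> R).
Hypotheses (sK : cancel s si) (siK : cancel si s).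

Lemma aut_inv0 : si 0 = 0.
Proof. by rewrite -{1}(rmorph0 s) sK. Qed.

Lemma aut_invZ (c : k) : {morph si : a / c *: a}.
Proof. by move=> a; rewrite -{1}(siK a) -linearZ sK. Qed.

Lemma spow0 n : spow s si n 0 = 0.
Proof. by case: n => m /=; elim: m => /= [|m ->]; rewrite ?rmorph0 ?aut_inv0. Qed.

Lemma spowZ n (c : k) : {morph spow s si n : a / c *: a}.
Proof. by case: n => m a /=; elim: m => /= [|m ->]; rewrite ?linearZ ?aut_invZ. Qed.

Lemma SLmulE (f g : SL R) n :
  SLmul s si f g n = \sum_(i <- finsupp f) f i * spow s si i (g (n - i)).
Proof.
rewrite fsfunE; case: ifP => // /negbT nfg; rewrite big1_seq // => i /andP [_ fi].
have /fsfun_dflt -> /= : n - i \notin finsupp g.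
  apply: contra nfg => gi; apply/imfset2P; exists i => //; exists (n - i) => //.
  by rewrite addrCA subrr addr0.
by rewrite spow0 mulr0.
Qed.

Variables H J : R -> Prop.
Hypotheses (idealH : is_ideal H) (idealJ : is_ideal J).

Lemma Ipow0 n : Ipow s si H J n 0.
Proof.
case: idealH idealJ => [H0 _ _] [J0 _ _].
by case: n => [[|m]|m] //=; apply: prodI0 => //; exists 0; rewrite aut_inv0.
Qed.

Lemma IpowZ n (c : k) x : Ipow s si H J n x -> Ipow s si H J n (c *: x).
Proof.
have idealZ I : is_ideal I -> forall y, I y -> I (c *: y).
  by case=> _ _ IM y /(IM c%:A) [+ _]; rewrite mulr_algl.
case: n => [[|m]|m] //=; apply: prodIZ; first exact: idealZ.
by move=> _ [y [Hy ->]]; exists (c *: y); rewrite aut_invZ; split => //; apply: idealZ.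
Qed.

Lemma inBR_mono n a : Ipow s si H J n a -> inBR s si H J (SLmono n a).
Proof. by move=> Ia m; rewrite SLmonoE; case: eqP => [->|_] //; apply: Ipow0. Qed.

End Automorphism.

Section Lift.
Variables (k : fieldType) (R R' : algType k).
Variables (s : {lrmorphism R -> R}) (si : R -> R).
Variables (s' : {lrmorphism R' -> R'}) (si' : R' -> R').
Hypotheses (sK : cancel s si) (siK : cancel si s).
Hypotheses (s'K : cancel s' si') (si'K : cancel si' s').
Variable phi : {lrmorphism R -> R'}.
Hypothesis phi_s : {morph phi : x / s x >-> s' x}.

Let phi_si : {morph phi : x / si x >-> si' x}.
Proof. exact: morph_cancel siK s'K phi_s. Qed.

Lemma spow_morph n : {morph phi : x / spow s si n x >-> spow s' si' n x}.
Proof. by case: n => m; apply: iter_morph. Qed.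

Variables (H J : R -> Prop) (H' J' : R' -> Prop).

Lemma Ipow_maps_into n : maps_into phi H H' -> maps_into phi J J' ->
  maps_into phi (Ipow s si H J n) (Ipow s' si' H' J' n).
Proof.
move=> HH' JJ'; case: n => [[|m]|m] //=; apply: prodI_maps_into => //.
- by move=> i; apply: img_maps_into (iter_morph phi_s i) JJ'.
- by move=> i; apply: img_maps_into (iter_morph phi_si i) HH'.
- exact: img_maps_into phi_si HH'.
Qed.

Lemma Ipow_maps_onto n : (forall y, exists x, phi x = y) ->
  maps_onto phi H H' -> maps_onto phi J J' ->
  maps_onto phi (Ipow s si H J n) (Ipow s' si' H' J' n).
Proof.
move=> phi_onto HH' JJ'; case: n => [[|m]|m] /=.
- by move=> y _; have [x <-] := phi_onto y; exists x.
- apply: prodI_maps_onto => // i; exact: img_maps_onto (iter_morph phi_s i) JJ'.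
- apply: prodI_maps_onto; last exact: img_maps_onto phi_si HH'.
  by move=> i; apply: img_maps_onto (iter_morph phi_si i) HH'.
Qed.

Variable gamma : k.
Hypothesis gamma_neq0 : gamma != 0.

Definition br_lift (f : SL R) : SL R' := [fsfun n in finsupp f => gamma ^ n *: phi (f n)].

Lemma br_liftE f n : br_lift f n = gamma ^ n *: phi (f n).
Proof. by rewrite fsfunE; case: ifP => // /negbT /fsfun_dflt ->; rewrite rmorph0 scaler0. Qed.

Lemma br_lift_mono n a : br_lift (SLmono n a) = SLmono n (gamma ^ n *: phi a).
Proof.
apply/fsfunP => m; rewrite br_liftE !SLmonoE.
by case: eqP => [->|_] //; rewrite rmorph0 scaler0.
Qed.

Lemma br_liftD f g : br_lift (SLadd f g) = SLadd (br_lift f) (br_lift g).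
Proof. by apply/fsfunP => n; rewrite br_liftE !SLaddE !br_liftE rmorphD scalerDr. Qed.

Lemma br_liftZ (c : k) f : br_lift (SLscale c f) = SLscale c (br_lift f).
Proof.
by apply/fsfunP => n; rewrite br_liftE !SLscaleE br_liftE linearZ !scalerA mulrC.
Qed.

(* gamma^i * gamma^(n-i) = gamma^n needs gamma to be invertible. *)
Lemma br_liftM f g : br_lift (SLmul s si f g) = SLmul s' si' (br_lift f) (br_lift g).
Proof.
apply/fsfunP => n; rewrite br_liftE !SLmulE // rmorph_sum scaler_sumr.
have supp_sub : (finsupp (br_lift f) `<=` finsupp f)%fset.
  apply/fsubsetP => i; rewrite !mem_finsupp br_liftE; apply: contra_neq => ->.
  by rewrite rmorph0 scaler0.
rewrite [RHS](big_fset_incl _ supp_sub); last first.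
  by move=> i _; rewrite mem_finsupp negbK => /eqP ->; rewrite mul0r.
apply: eq_bigr => i _; rewrite !br_liftE spowZ // rmorphM -spow_morph.
by rewrite -scalerAl !scalerAr scalerA -expfzDr // addrCA subrr addr0.
Qed.

Lemma br_lift1 : br_lift (SLone R) = SLone R'.
Proof. by rewrite br_lift_mono expr0z scale1r rmorph1. Qed.

Lemma br_lift_inj : injective phi -> injective br_lift.
Proof.
move=> phi_inj f g /fsfunP fg; apply/fsfunP => n; apply: phi_inj.
have := fg n; rewrite !br_liftE => /(congr1 (fun v => (gamma ^ n)^-1 *: v)).
by rewrite !scalerA mulVf ?expfz_neq0 // !scale1r.
Qed.

Hypotheses (idealH : is_ideal H) (idealJ : is_ideal J).
Hypotheses (idealH' : is_ideal H') (idealJ' : is_ideal J').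

Lemma inBR_br_lift f : maps_into phi H H' -> maps_into phi J J' ->
  inBR s si H J f -> inBR s' si' H' J' (br_lift f).
Proof.
by move=> HH' JJ' fB n; rewrite br_liftE; apply: IpowZ => //; apply: Ipow_maps_into.
Qed.

Lemma injective_of_br_lift :
  (forall f g, inBR s si H J f -> inBR s si H J g -> br_lift f = br_lift g -> f = g) ->
  injective phi.
Proof.
move=> lift_inj x y phixy.
have /(congr1 (fun f : SL R => f 0)) : SLmono 0 x = SLmono 0 y.
  by apply: lift_inj; rewrite ?br_lift_mono ?phixy //; apply: inBR_mono.
by rewrite !SLmonoE eqxx.
Qed.

Lemma surjective_of_br_lift :
  (forall f', inBR s' si' H' J' f' -> exists2 f, inBR s si H J f & br_lift f = f') ->
  forall y, exists x, phi x = y.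
Proof.
move=> lift_onto y; have [f _ /(congr1 (fun f' : SL R' => f' 0))] :=
  lift_onto _ (inBR_mono s'K idealH' idealJ' (I : Ipow s' si' H' J' 0 y)).
by rewrite br_liftE SLmonoE eqxx expr0z scale1r; exists (f 0).
Qed.

Lemma br_lift_onto : (forall y, exists x, phi x = y) ->
  maps_onto phi H H' -> maps_onto phi J J' ->
  forall f', inBR s' si' H' J' f' -> exists2 f, inBR s si H J f & br_lift f = f'.
Proof.
move=> phi_onto HH' JJ' f' f'B.
have pre n : exists x, Ipow s si H J n x /\ phi x = gamma ^ (- n) *: f' n.
  have [x Ix phix] := Ipow_maps_onto phi_onto HH' JJ' (IpowZ s'K si'K idealH' idealJ'
    (gamma ^ (- n)) (f'B n)).
  by exists x.
pose F n := proj1_sig (constructive_indefinite_description _ (pre n)).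
have FI n : Ipow s si H J n (F n).
  by rewrite /F; case: constructive_indefinite_description => x [].
have phiF n : phi (F n) = gamma ^ (- n) *: f' n.
  by rewrite /F; case: constructive_indefinite_description => x [].
exists [fsfun n in finsupp f' => F n].
  by move=> n; rewrite fsfunE; case: ifP => _; [apply: FI | apply: Ipow0].
apply/fsfunP => n; rewrite br_liftE fsfunE; case: ifP => [_|/negbT /fsfun_dflt ->].
  by rewrite phiF scalerA -expfzDr // subrr expr0z scale1r.
by rewrite rmorph0 scaler0.
Qed.

End Lift.

Theorem proposition2p10 (k : fieldType) (R R' : algType k)
  (s : {lrmorphism R -> R}) (si : R -> R) (H J : R -> Prop)
  (s' : {lrmorphism R' -> R'}) (si' : R' -> R') (H' J' : R' -> Prop)
  (hB : BR_data s si H J) (hB' : BR_data s' si' H' J')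
  (phi : {lrmorphism R -> R'})
  (hH : forall x, H x -> H' (phi x)) (hJ : forall x, J x -> J' (phi x))
  (hcomm : forall x, phi (s x) = s' (phi x))
  (gamma : k) (hgamma : gamma != 0) :
  exists Phi : SL R -> SL R',
    [/\ (forall f, inBR s si H J f -> inBR s' si' H' J' (Phi f)) /\
        (forall f g, inBR s si H J f -> inBR s si H J g ->
           Phi (SLadd f g) = SLadd (Phi f) (Phi g)),
        (forall (c : k) f, inBR s si H J f ->
           Phi (SLscale c f) = SLscale c (Phi f)),
        (forall f g, inBR s si H J f -> inBR s si H J g ->
           Phi (SLmul s si f g) = SLmul s' si' (Phi f) (Phi g)),
        Phi (@SLone R) = @SLone R' &
        (forall (n : int) f, inBR s si H J f ->
           (forall m, m != n -> f m = 0) ->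
           (forall m, m != n -> Phi f m = 0))]
    /\ (forall (n : int) (a : R), Ipow s si H J n a ->
          Phi (SLmono n a) = SLmono n (gamma ^ n *: phi a))
    (* (1) *)
    /\ ((forall f g, inBR s si H J f -> inBR s si H J g -> Phi f = Phi g -> f = g)
          -> injective phi)
    /\ ((forall f', inBR s' si' H' J' f' -> exists2 f, inBR s si H J f & Phi f = f')
          -> forall y : R', exists x : R, phi x = y)
    (* (2) *)
    /\ (is_domain R' -> injective phi ->
          forall f g, inBR s si H J f -> inBR s si H J g -> Phi f = Phi g -> f = g)
    (* (3) *)
    /\ ((forall y, H' y <-> exists2 x, H x & phi x = y) ->
        (forall y, J' y <-> exists2 x, J x & phi x = y) ->
        (forall y : R', exists x : R, phi x = y) ->
          forall f', inBR s' si' H' J' f' -> exists2 f, inBR s si H J f & Phi f = f').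
Proof.
case: hB => sK siK idealH idealJ _; case: hB' => s'K si'K idealH' idealJ' _.
exists (br_lift phi gamma); split.
  split; [split|..] => [f|f g _ _|c f _|f g _ _||n f _ fn m /fn].
  - exact: inBR_br_lift.
  - exact: br_liftD.
  - exact: br_liftZ.
  - exact: br_liftM.
  - exact: br_lift1.
  - by rewrite br_liftE => ->; rewrite rmorph0 scaler0.
split=> [n a _|]; first exact: br_lift_mono.
split; first exact: injective_of_br_lift.
split; first exact: surjective_of_br_lift.
(* Phi acts coefficientwise, so (2) holds without R' being a domain. *)
split=> [_ phi_inj f g _ _|eH eJ phi_onto]; first exact: br_lift_inj.
by apply: br_lift_onto => // y; [move/eH | move/eJ].
Qed.
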